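(* Consider the ISQA framework described in the context for $\min_x F(x)=f(x)+\Psi(x)$, run with the stopping condition $\|r^t\|\le\epsilon_t$, and assume there are $M\ge m>0$ with $M I\succeq H_t\succeq mI$ for all $t$. Let $x^*$ satisfy $$0\in\operatorname{relint}\big(\partial F(x^* )\big)=\nabla f(x^* )+\operatorname{relint}\big(\partial\Psi(x^* )\big),$$ with $\Psi$ partly smooth at $x^*$ relative to some manifold $\mathcal{M}$, and assume $f$ is $L$-smooth (gradient $L$-Lipschitz) in a neighborhood of $x^*$ for some $L>0$. Then there exist $\epsilon,\delta>0$ such that, for any iteration $t$, if $\|x^t-x^*\|\le\delta$, $\epsilon_t\le\epsilon$ and $\alpha_t=1$, then $x^{t+1}\in\mathcal{M}$.
   Context: Standing setting: $\mathcal{H}$ is a Euclidean space; $f:\mathcal{H}\to\mathbb{R}$ is continuously differentiable with Lipschitz gradient; $\Psi:\mathcal{H}\to(-\infty,\infty]$ is convex, proper, lower semicontinuous; $F=f+\Psi$ has a nonempty solution set. $\partial F(x)=\nabla f(x)+\partial\Psi(x)$; $\operatorname{relint}$ is relative interior. ISQA framework: given $x^0\in\mathcal{H}$ and $\gamma,\beta\in(0,1)$, for $t=0,1,\dots$: choose a self-adjoint positive semidefinite linear operator $H_t$ on $\mathcal{H}$ and $\epsilon_t\ge0$; let $Q_t(p):=\langle\nabla f(x^t),p\rangle+\tfrac12\langle p,H_tp\rangle+\Psi(x^t+p)-\Psi(x^t)$; compute $p^t$ with $\|r^t\|\le\epsilon_t$, where $r^t$ is the minimum-norm element of $\partial_pQ_t(p^t)$;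 let $\alpha_t$ be the largest element of $\{1,\beta,\beta^2,\dots\}$ with $F(x^t+\alpha_tp^t)\le F(x^t)+\gamma\alpha_tQ_t(p^t)$; set $x^{t+1}=x^t+\alpha_tp^t$. Manifolds and partial smoothness: $\mathcal{M}$ is a $p$-dimensional $\mathcal{C}^k$ manifold around $x$ if near $x$ it is the zero set of a $\mathcal{C}^k$ map $\Phi:\mathcal{H}\to\mathbb{R}^{\dim\mathcal{H}-p}$ with surjective derivative at $x$. $\Psi$ is partly smooth at $x^*$ relative to $\mathcal{M}\ni x^*$ if $\partial\Psi(x^* )\ne\emptyset$ and (i) near $x^*$, $\mathcal{M}$ is a $\mathcal{C}^2$ manifold and $\Psi|_{\mathcal{M}}$ is $\mathcal{C}^2$; (ii) the affine span of $\partial\Psi(x^* )$ is a translate of the normal space to $\mathcal{M}$ at $x^*$; (iii) $\partial\Psi$ is continuous at $x^*$ relative to $\mathcal{M}$; (iv) $\Psi$ is regular at points of $\mathcal{M}$ near $x^*$ with nonempty subdifferential. *)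

From HB Require Import structures.
From mathcomp Require Import all_boot all_order all_algebra.
From mathcomp Require Import boolp classical_sets reals constructive_ereal.
Set Implicit Arguments. Unset Strict Implicit. Unset Printing Implicit Defensive.
Import Order.TTheory GRing.Theory Num.Theory.
Local Open Scope ring_scope.
Local Open Scope classical_set_scope.

Section Defs.
Variable R : realType.

Definition dotv m (u v : 'rV[R]_m) : R := \sum_(i < m) u 0 i * v 0 i.
Definition enorm m (u : 'rV[R]_m) : R := Num.sqrt (dotv u u).

Definition seq_lim m (u : nat -> 'rV[R]_m) (l : 'rV[R]_m) : Prop :=
  forall e : R, 0 < e -> exists N : nat, forall k, (N <= k)%N -> enorm (u k - l) < e.

Definition open_set m (U : set 'rV[R]_m) : Prop :=
  forall x, U x -> exists r : R, 0 < r /\ forall y, enorm (y - x) < r -> U y.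

Definition closed_set m (C : set 'rV[R]_m) : Prop :=
  forall (u : nat -> 'rV[R]_m) l, (forall k, C (u k)) -> seq_lim u l -> C l.

Definition has_deriv m k (F : 'rV[R]_m -> 'rV[R]_k) (x : 'rV[R]_m) (D : 'M[R]_(m, k)) :=
  forall e : R, 0 < e -> exists d : R, 0 < d /\
    forall h, enorm h < d -> enorm (F (x + h) - F x - h *m D) <= e * enorm h.

Definition continuous_on m k (G : 'rV[R]_m -> 'rV[R]_k) (U : set 'rV[R]_m) :=
  forall x, U x -> forall e : R, 0 < e -> exists d : R, 0 < d /\
    forall y, U y -> enorm (y - x) < d -> enorm (G y - G x) < e.

Definition C1_on m k (F : 'rV[R]_m -> 'rV[R]_k) (U : set 'rV[R]_m) :=
  exists DF : 'rV[R]_m -> 'M[R]_(m, k),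
    (forall x, U x -> has_deriv F x (DF x)) /\ continuous_on (fun x => mxvec (DF x)) U.

Definition C2_on m k (F : 'rV[R]_m -> 'rV[R]_k) (U : set 'rV[R]_m) :=
  exists DF : 'rV[R]_m -> 'M[R]_(m, k),
    (forall x, U x -> has_deriv F x (DF x)) /\ C1_on (fun x => mxvec (DF x)) U.

Definition has_gradient n (f : 'rV[R]_n -> R) (g : 'rV[R]_n -> 'rV[R]_n) :=
  forall x (e : R), 0 < e -> exists d : R, 0 < d /\
    forall h, enorm h < d -> `| f (x + h) - f x - dotv (g x) h | <= e * enorm h.

Definition manifold_chart n (M : set 'rV[R]_n) (x : 'rV[R]_n) k (U : set 'rV[R]_n)
    (Phi : 'rV[R]_n -> 'rV[R]_k) (DPhi : 'rV[R]_n -> 'M[R]_(n, k)) :=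
  [/\ open_set U, U x, C2_on Phi U,
      (forall y, U y -> has_deriv Phi y (DPhi y)) &
      (forall v : 'rV[R]_k, exists h, h *m DPhi x = v)] /\
  (forall y, U y -> (M y <-> Phi y = 0)).

Definition C2_manifold_around n (M : set 'rV[R]_n) x :=
  exists k U (Phi : 'rV[R]_n -> 'rV[R]_k) DPhi, manifold_chart M x U Phi DPhi.

(* normal space at x = orthogonal complement of the tangent space ker DPhi(x) *)
Definition normal_space n (M : set 'rV[R]_n) x : set 'rV[R]_n :=
  [set v | exists k U (Phi : 'rV[R]_n -> 'rV[R]_k) DPhi,
     manifold_chart M x U Phi DPhi /\ forall h, h *m DPhi x = 0 -> dotv v h = 0].

Definition convex_fun n (Psi : 'rV[R]_n -> \bar R) :=
  forall (x y : 'rV[R]_n) (t : R), 0 < t < 1 ->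
    (Psi ((t *: x + (1 - t) *: y)%R) <= (t%:E * Psi x)%E + ((1 - t)%:E * Psi y)%E)%E.

Definition proper_fun n (Psi : 'rV[R]_n -> \bar R) :=
  (forall x, Psi x != -oo%E) /\ exists x, Psi x \is a fin_num.

Definition lsc_fun n (Psi : 'rV[R]_n -> \bar R) :=
  forall x (a : R), (a%:E < Psi x)%E -> exists d : R, 0 < d /\
    forall y, enorm (y - x) < d -> (a%:E < Psi y)%E.

Definition subdiff n (Psi : 'rV[R]_n -> \bar R) (x : 'rV[R]_n) : set 'rV[R]_n :=
  [set g | Psi x \is a fin_num /\
     forall y, (Psi x + (dotv g (y - x))%:E <= Psi y)%E].

Definition aff_span n (S : set 'rV[R]_n) : set 'rV[R]_n :=
  [set y | exists (m : nat) (lam : 'I_m -> R) (g : 'I_m -> 'rV[R]_n),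
     [/\ forall i, S (g i), \sum_(i < m) lam i = 1 & y = \sum_(i < m) lam i *: g i]].

Definition relint n (S : set 'rV[R]_n) : set 'rV[R]_n :=
  [set g | S g /\ exists e : R, 0 < e /\
     forall y, aff_span S y -> enorm (y - g) < e -> S y].

Definition minnorm n (S : set 'rV[R]_n) (r : 'rV[R]_n) :=
  S r /\ forall s, S s -> enorm r <= enorm s.

Definition epigraph n (Psi : 'rV[R]_n -> \bar R) : set 'rV[R]_(n + 1) :=
  [set z | (Psi (lsubmx z) <= ((rsubmx z) 0 0)%:E)%E].

Definition frechet_normal m (C : set 'rV[R]_m) (z : 'rV[R]_m) : set 'rV[R]_m :=
  [set v | forall e : R, 0 < e -> exists d : R, 0 < d /\
     forall z', C z' -> enorm (z' - z) < d -> dotv v (z' - z) <= e * enorm (z' - z)].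

Definition limiting_normal m (C : set 'rV[R]_m) (z : 'rV[R]_m) : set 'rV[R]_m :=
  [set v | exists (zk vk : nat -> 'rV[R]_m),
     [/\ forall k, C (zk k), seq_lim zk z,
         forall k, frechet_normal C (zk k) (vk k) & seq_lim vk v]].

Definition locally_closed m (C : set 'rV[R]_m) (z : 'rV[R]_m) :=
  exists d : R, 0 < d /\ closed_set (C `&` [set y | enorm (y - z) <= d]).

Definition clarke_regular_set m (C : set 'rV[R]_m) (z : 'rV[R]_m) :=
  [/\ C z, locally_closed C z &
      forall v, limiting_normal C z v -> frechet_normal C z v].

Definition regular_at n (Psi : 'rV[R]_n -> \bar R) (x : 'rV[R]_n) :=
  Psi x \is a fin_num /\
  clarke_regular_set (epigraph Psi) (row_mx x (const_mx (fine (Psi x)) : 'rV[R]_1)).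

(* continuity of the set-valued map subdiff Psi at xs relative to M
   (inner and outer semicontinuity) *)
Definition subdiff_continuous_rel n (Psi : 'rV[R]_n -> \bar R) (M : set 'rV[R]_n) xs :=
  (forall g, subdiff Psi xs g -> forall e : R, 0 < e -> exists d : R, 0 < d /\
     forall y, M y -> enorm (y - xs) < d ->
       exists g', subdiff Psi y g' /\ enorm (g' - g) < e) /\
  (forall (y g : nat -> 'rV[R]_n) g0, (forall k, M (y k)) -> seq_lim y xs ->
     (forall k, subdiff Psi (y k) (g k)) -> seq_lim g g0 -> subdiff Psi xs g0).

Definition partly_smooth n (Psi : 'rV[R]_n -> \bar R) (xs : 'rV[R]_n) (M : set 'rV[R]_n) :=
  M xs /\
  [/\ (exists g, subdiff Psi xs g),
      C2_manifold_around M xs /\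
        (exists (U : set 'rV[R]_n) (g : 'rV[R]_n -> 'rV[R]_1),
           [/\ open_set U, U xs, C2_on g U &
               forall y, U y -> M y -> Psi y = (g y 0 0)%:E]),
      (exists s, forall y, aff_span (subdiff Psi xs) y <-> normal_space M xs (y - s)),
      subdiff_continuous_rel Psi M xs &
      exists d : R, 0 < d /\ forall y, M y -> enorm (y - xs) < d ->
        regular_at Psi y /\ exists g, subdiff Psi y g].

Definition Fobj n (f : 'rV[R]_n -> R) (Psi : 'rV[R]_n -> \bar R) x : \bar R :=
  ((f x)%:E + Psi x)%E.

Definition subdiffF n (gradf : 'rV[R]_n -> 'rV[R]_n) (Psi : 'rV[R]_n -> \bar R) x
  : set 'rV[R]_n := [set v | exists u, subdiff Psi x u /\ v = gradf x + u].

(* Q_t(p) with gx = grad f(x^t), Hm = H_t, xt = x^t *)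
Definition Qmodel n (gx : 'rV[R]_n) (Hm : 'M[R]_n) (Psi : 'rV[R]_n -> \bar R)
    (xt p : 'rV[R]_n) : \bar R :=
  ((dotv gx p + 2^-1 * dotv p (p *m Hm))%:E + Psi ((xt + p)%R) - Psi xt)%E.

Definition armijo n (f : 'rV[R]_n -> R) (gradf : 'rV[R]_n -> 'rV[R]_n)
    (Psi : 'rV[R]_n -> \bar R) (gamma : R) (Hm : 'M[R]_n) (xt p : 'rV[R]_n) (a : R) :=
  (Fobj f Psi ((xt + a *: p)%R) <=
     Fobj f Psi xt + (gamma * a)%:E * Qmodel (gradf xt) Hm Psi xt p)%E.

Definition isqa_run n (f : 'rV[R]_n -> R) (gradf : 'rV[R]_n -> 'rV[R]_n)
    (Psi : 'rV[R]_n -> \bar R) (gamma beta : R) (x : nat -> 'rV[R]_n)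
    (Hs : nat -> 'M[R]_n) (eps : nat -> R) (p r : nat -> 'rV[R]_n) (alpha : nat -> R) :=
  [/\ 0 < gamma < 1, 0 < beta < 1 &
      (forall t, 0 <= eps t)] /\
  [/\ (forall t, (Hs t)^T = Hs t /\ forall v, 0 <= dotv v (v *m Hs t)),
      (forall t, minnorm (subdiff (Qmodel (gradf (x t)) (Hs t) Psi (x t)) (p t)) (r t)
                 /\ enorm (r t) <= eps t),
      (forall t, [/\ exists k : nat, alpha t = beta ^+ k,
                     armijo f gradf Psi gamma (Hs t) (x t) (p t) (alpha t) &
                     forall k : nat, armijo f gradf Psi gamma (Hs t) (x t) (p t) (beta ^+ k) ->
                        beta ^+ k <= alpha t]) &
      (forall t, x t.+1 = x t + alpha t *: p t)].

End Defs.

(* Near xs, M is the zero set of Phi, whose derivative A at xs is onto.  As 0 lies in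
   the relative interior of the subdifferential of F at xs and the affine span of the
   subdifferential of Psi at xs is a translate of the normal space (the range of A^T),
   the points -grad f(xs) +- rho A^T e_i are subgradients of Psi at xs, and by inner
   semicontinuity along M every z in M near xs has subgradients near each of them.
   Now let y be near xs with a subgradient v of Psi near -grad f(xs).  Minimising
   |Phi(y - mu W)| over mu, for a right inverse W of A, gives z = y - mu W in M, and
   monotonicity of the subdifferential, tested against these subgradients at z, bounds
   every coordinate of mu = (y - z) A by a small multiple of |y - z| <= |mu| |W|; hence
   y = z lies in M.  A unit ISQA step produces the subgradient r - grad f(x) - p H of
   Psi at x + p, and monotonicity against -grad f(xs) together with m I <= H <= M I
   gives |p| = O(|x - xs| + eps), so x + p qualifies as y. *)

From Pilot Require Import Defs.
From HB Require Import structures.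
From mathcomp Require Import all_boot all_order all_algebra.
From mathcomp Require Import boolp classical_sets reals constructive_ereal.
From mathcomp Require Import topology normedtype derive matrix_normedtype.
From mathcomp Require Import ring lra.
Import Order.TTheory GRing.Theory Num.Theory.
Import numFieldTopology.Exports numFieldNormedType.Exports.
Set Implicit Arguments. Unset Strict Implicit. Unset Printing Implicit Defensive.
Local Open Scope ring_scope.
Local Open Scope classical_set_scope.
(* [topology] also defines a [normal_space]. *)
Import Defs.

Section Euclidean.
Variable R : realType.
Implicit Types (a b c : R).

Lemma dotvE m (u v : 'rV[R]_m) : dotv u v = (u *m v^T) 0 0.
Proof. by rewrite /dotv !mxE; apply: eq_bigr => i _; rewrite mxE. Qed.

Lemma dotvC m (u v : 'rV[R]_m) : dotv u v = dotv v u.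
Proof. by apply: eq_bigr => i _; rewrite mulrC. Qed.

Lemma dotvDl m (u w v : 'rV[R]_m) : dotv (u + w) v = dotv u v + dotv w v.
Proof. by rewrite /dotv -big_split; apply: eq_bigr => i _; rewrite mxE mulrDl. Qed.

Lemma dotvDr m (v u w : 'rV[R]_m) : dotv v (u + w) = dotv v u + dotv v w.
Proof. by rewrite dotvC dotvDl !(dotvC v). Qed.

Lemma dotvZl m a (u v : 'rV[R]_m) : dotv (a *: u) v = a * dotv u v.
Proof. by rewrite /dotv mulr_sumr; apply: eq_bigr => i _; rewrite mxE mulrA. Qed.

Lemma dotvZr m a (u v : 'rV[R]_m) : dotv v (a *: u) = a * dotv v u.
Proof. by rewrite dotvC dotvZl dotvC. Qed.

Lemma dotvNl m (u v : 'rV[R]_m) : dotv (- u) v = - dotv u v.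
Proof. by rewrite -scaleN1r dotvZl mulN1r. Qed.

Lemma dotvNr m (u v : 'rV[R]_m) : dotv v (- u) = - dotv v u.
Proof. by rewrite dotvC dotvNl dotvC. Qed.

Lemma dotvBl m (u w v : 'rV[R]_m) : dotv (u - w) v = dotv u v - dotv w v.
Proof. by rewrite dotvDl dotvNl. Qed.

Lemma dotvBr m (v u w : 'rV[R]_m) : dotv v (u - w) = dotv v u - dotv v w.
Proof. by rewrite dotvDr dotvNr. Qed.

Lemma dotv0l m (v : 'rV[R]_m) : dotv 0 v = 0.
Proof. by rewrite /dotv big1 // => i _; rewrite mxE mul0r. Qed.

Lemma dotv0r m (v : 'rV[R]_m) : dotv v 0 = 0.
Proof. by rewrite dotvC dotv0l. Qed.

Lemma dotv_mulmx m k (u : 'rV[R]_k) (A : 'M[R]_(m, k)) (h : 'rV[R]_m) :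
  dotv (u *m A^T) h = dotv u (h *m A).
Proof. by rewrite !dotvE trmx_mul mulmxA. Qed.

Lemma dotv_delta k (i : 'I_k) (w : 'rV[R]_k) : dotv (delta_mx 0 i) w = w 0 i.
Proof.
rewrite /dotv (bigD1 i) //= !mxE !eqxx mul1r big1 ?addr0 // => j /negbTE ji.
by rewrite !mxE ji mul0r.
Qed.

Lemma dotvv_ge0 m (u : 'rV[R]_m) : 0 <= dotv u u.
Proof. by rewrite sumr_ge0 // => i _; rewrite -expr2 sqr_ge0. Qed.

Lemma dotvv_eq0 m (u : 'rV[R]_m) : dotv u u = 0 -> u = 0.
Proof.
move=> uu0; apply/rowP => i; rewrite mxE; apply/eqP; rewrite -sqrf_eq0 eq_le sqr_ge0 andbT.
by rewrite -uu0 /dotv (bigD1 i) //= expr2 lerDl sumr_ge0 // => j _; rewrite -expr2 sqr_ge0.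
Qed.

Lemma enorm_ge0 m (u : 'rV[R]_m) : 0 <= enorm u.
Proof. exact: sqrtr_ge0. Qed.

Lemma enorm_sqr m (u : 'rV[R]_m) : enorm u ^+ 2 = dotv u u.
Proof. by rewrite sqr_sqrtr // dotvv_ge0. Qed.

Lemma enorm0 m : enorm (0 : 'rV[R]_m) = 0.
Proof. by rewrite /enorm dotv0l sqrtr0. Qed.

Lemma enorm_eq0 m (u : 'rV[R]_m) : enorm u = 0 -> u = 0.
Proof. by move=> u0; apply: dotvv_eq0; rewrite -enorm_sqr u0 expr0n. Qed.

Lemma ler_of_sqr a b : 0 <= b -> a ^+ 2 <= b ^+ 2 -> a <= b.
Proof.
move=> b0 ab; apply: le_trans (ler_norm a) _.
by rewrite -(ler_pXn2r (_ : 0 < 2)%N) ?nnegrE ?normr_ge0 // real_normK ?num_real.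
Qed.

Lemma discriminant_le a b c : 0 <= c ->
  (forall t, 0 <= a - 2 * t * b + t ^+ 2 * c) -> b ^+ 2 <= a * c.
Proof.
move=> c0 nonneg; have [cp|] := ltP 0 c.
  have := nonneg (b / c).
  have -> : a - 2 * (b / c) * b + (b / c) ^+ 2 * c = (a * c - b ^+ 2) / c.
    by field; rewrite gt_eqF.
  by rewrite pmulr_lge0 ?invr_gt0 // subr_ge0.
move=> c_le0; have c00 : c = 0 by apply/eqP; rewrite eq_le c_le0 c0.
have [->|bn0] := eqVneq b 0; first by rewrite expr0n /= c00 mulr0.
have := nonneg ((a + 1) / (2 * b)).
rewrite c00 mulr0 addr0 (_ : _ - _ = - 1); first by rewrite oppr_ge0 ler10.
by field; rewrite bn0.
Qed.

Lemma dotv_sqr_le m (u v : 'rV[R]_m) : dotv u v ^+ 2 <= dotv u u * dotv v v.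
Proof.
apply: discriminant_le; first exact: dotvv_ge0.
move=> t; have := dotvv_ge0 (u - t *: v).
rewrite !dotvBl !dotvBr !dotvZl !dotvZr (dotvC v u); congr (_ <= _); ring.
Qed.

Lemma dotv_le_enorm m (u v : 'rV[R]_m) : dotv u v <= enorm u * enorm v.
Proof.
apply: ler_of_sqr; first by rewrite mulr_ge0 ?enorm_ge0.
by rewrite exprMn !enorm_sqr dotv_sqr_le.
Qed.

Lemma enormD m (u v : 'rV[R]_m) : enorm (u + v) <= enorm u + enorm v.
Proof.
apply: ler_of_sqr; first by rewrite addr_ge0 ?enorm_ge0.
rewrite enorm_sqr sqrrD !enorm_sqr dotvDl !dotvDr (dotvC v u).
have := dotv_le_enorm u v; lra.
Qed.

Lemma enormZ m a (u : 'rV[R]_m) : enorm (a *: u) = `|a| * enorm u.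
Proof. by rewrite /enorm dotvZl dotvZr mulrA -expr2 sqrtrM ?sqr_ge0 // sqrtr_sqr. Qed.

Lemma enormN m (u : 'rV[R]_m) : enorm (- u) = enorm u.
Proof. by rewrite /enorm dotvNl dotvNr opprK. Qed.

Lemma enormBC m (u v : 'rV[R]_m) : enorm (u - v) = enorm (v - u).
Proof. by rewrite -enormN opprB. Qed.

Lemma enormB m (u v : 'rV[R]_m) : enorm (u - v) <= enorm u + enorm v.
Proof. by apply: le_trans (enormD _ _) _; rewrite enormN. Qed.

Lemma enorm_subr m (u v : 'rV[R]_m) : enorm u <= enorm (u - v) + enorm v.
Proof. by have := enormD (u - v) v; rewrite subrK. Qed.

Lemma enorm_dist m (u v : 'rV[R]_m) : `|enorm u - enorm v| <= enorm (u - v).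
Proof.
rewrite ler_norml; have := enorm_subr u v; have := enorm_subr v u.
rewrite (enormBC v); lra.
Qed.

Lemma enorm_delta k (i : 'I_k) : enorm (delta_mx 0 i : 'rV[R]_k) = 1.
Proof. by rewrite /enorm dotv_delta mxE !eqxx sqrtr1. Qed.

Lemma coord_le_enorm m (u : 'rV[R]_m) i : `|u 0 i| <= enorm u.
Proof.
apply: ler_of_sqr; first exact: enorm_ge0.
rewrite enorm_sqr real_normK ?num_real // /dotv expr2 (bigD1 i) //= lerDl.
by rewrite sumr_ge0 // => j _; rewrite -expr2 sqr_ge0.
Qed.

Lemma enorm_le_sum m (u : 'rV[R]_m) : enorm u <= \sum_i `|u 0 i|.
Proof.
apply: ler_of_sqr; first by rewrite sumr_ge0.
rewrite enorm_sqr /dotv expr2 mulr_suml; apply: ler_sum => i _.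
apply: le_trans (ler_norm _) _; rewrite normrM ler_wpM2l // (bigD1 i) //= lerDl.
by rewrite sumr_ge0.
Qed.

Lemma enorm_le_coord m (u : 'rV[R]_m) c : (forall i, `|u 0 i| <= c) -> enorm u <= m%:R * c.
Proof.
move=> uc; apply: le_trans (enorm_le_sum _) _.
apply: (@le_trans _ _ (\sum_(i < m) c)); first by apply: ler_sum => i _.
by rewrite sumr_const card_ord mulr_natl.
Qed.

End Euclidean.

Section MatrixNorm.
Variable R : realType.

Definition mxnorm1 m k (A : 'M[R]_(m, k)) : R := \sum_i \sum_j `|A i j|.

Lemma mxnorm1_ge0 m k (A : 'M[R]_(m, k)) : 0 <= mxnorm1 A.
Proof. by rewrite sumr_ge0 // => i _; rewrite sumr_ge0. Qed.

Lemma enorm_mulmx m k (v : 'rV[R]_m) (A : 'M[R]_(m, k)) :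
  enorm (v *m A) <= enorm v * mxnorm1 A.
Proof.
apply: le_trans (enorm_le_sum _) _.
rewrite /mxnorm1 exchange_big mulr_sumr; apply: ler_sum => j _; rewrite mxE mulr_sumr.
apply: le_trans (ler_norm_sum _ _ _) _; apply: ler_sum => i _.
by rewrite normrM ler_wpM2r // coord_le_enorm.
Qed.

Lemma mxnorm1_le_mxvec m k (A : 'M[R]_(m, k)) : mxnorm1 A <= (m * k)%:R * enorm (mxvec A).
Proof.
apply: (@le_trans _ _ (\sum_(i < m) \sum_(j < k) enorm (mxvec A))).
  by apply: ler_sum => i _; apply: ler_sum => j _; rewrite -mxvecE coord_le_enorm.
by rewrite !sumr_const !card_ord -mulrnA mulr_natl [(k * m)%N]mulnC.
Qed.

Lemma mulmx_eq0_of_coord_small k n (mu : 'rV[R]_k) (W : 'M[R]_(k, n)) (kap : R) :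
  kap * (k%:R * mxnorm1 W) <= 2^-1 ->
  (forall i, `|mu 0 i| <= kap * enorm (mu *m W)) -> mu *m W = 0.
Proof.
move=> kW /enorm_le_coord coord; apply: enorm_eq0; apply/eqP; rewrite eq_le enorm_ge0 andbT.
have := le_trans (enorm_mulmx mu W) (ler_wpM2r (mxnorm1_ge0 W) coord).
have := ler_wpM2r (enorm_ge0 (mu *m W)) kW; have := enorm_ge0 (mu *m W); lra.
Qed.

Lemma surjective_right_inverse n k (A : 'M[R]_(n, k)) :
  (forall v : 'rV_k, exists h, h *m A = v) -> exists W : 'M_(k, n), W *m A = 1%:M.
Proof.
move=> surj; have /choice [h hA] : forall i : 'I_k, exists h : 'rV_n, h *m A = 'e_i by move=> i; apply: surj.
by exists (\matrix_i h i); apply/row_matrixP => i; rewrite row_mul rowK hA row1.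
Qed.

End MatrixNorm.

Section Small.
Variable R : realType.

Lemma le0_of_le_mul (a c : R) : 0 <= c -> (forall e : R, 0 < e -> a <= e * c) -> a <= 0.
Proof.
move=> c0 small; rewrite leNgt; apply/negP => a0.
have cp : 0 < c + 1 by lra.
have := small (a / (c + 1)) (divr_gt0 a0 cp).
rewrite mulrAC ler_pdivlMr //; nra.
Qed.

Lemma le0_of_le_mul_small (a c : R) : (forall s, 0 < s < 1 -> a <= s * c) -> a <= 0.
Proof.
move=> small; apply: (le0_of_le_mul (normr_ge0 c)) => e e0.
pose s := Order.min e 2^-1.
have sp : 0 < s by rewrite lt_min e0 invr_gt0 ltr0n.
have s1 : s < 1 by rewrite gt_min invf_lt1 ?ltr1n ?orbT.
apply: le_trans (small s (introT andP (conj sp s1))) _.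
apply: le_trans (ler_wpM2l (ltW sp) (ler_norm c)) _.
by rewrite ler_wpM2r // ge_min lexx.
Qed.

Lemma half_inv_scale (w : R) : 0 <= w ->
  0 < (2 * (w + 1))^-1 /\ (2 * (w + 1))^-1 * w <= 2^-1.
Proof.
move=> w0; have wp : 0 < 2 * (w + 1) by lra.
split; first by rewrite invr_gt0.
have : (2 * (w + 1))^-1 * (2 * (w + 1)) = 1 by rewrite mulVf // gt_eqF.
have := invr_gt0 (2 * (w + 1)); rewrite wp; lra.
Qed.

Lemma mul_lt_of_le_div (t d x : R) : 0 < d -> 0 <= x -> 0 <= t -> t <= d / (x + 1) -> t * x < d.
Proof.
move=> d0 x0 t0 td; apply: le_lt_trans (_ : d / (x + 1) * x < d).
  by rewrite ler_wpM2r.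
by rewrite mulrAC ltr_pdivrMr; nra.
Qed.

Lemma small_scale (c1 c2 d1 d2 r : R) : 0 <= c1 -> 0 <= c2 -> 0 < d1 -> 0 < d2 -> 0 < r ->
  exists tau : R, [/\ 0 < tau, tau < r, tau * c1 < d1 & tau * c2 < d2].
Proof.
move=> c10 c20 d1p d2p rp.
exists (Order.min (Order.min (d1 / (c1 + 1)) (d2 / (c2 + 1))) (r / 2)).
set tau := Order.min _ _; have taup : 0 < tau by rewrite !lt_min !divr_gt0 //; lra.
have [t1 t2 tr] : [/\ tau <= d1 / (c1 + 1), tau <= d2 / (c2 + 1) & tau <= r / 2].
  by split; rewrite /tau !ge_min lexx ?orbT.
by split; rewrite ?mul_lt_of_le_div ?(ltW taup) //; lra.
Qed.

Lemma near_finite (I : finType) m (x0 : 'rV[R]_m) (Q : I -> 'rV[R]_m -> Prop) :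
  (forall i, exists d : R, 0 < d /\ forall y, enorm (y - x0) < d -> Q i y) ->
  exists d : R, 0 < d /\ forall i y, enorm (y - x0) < d -> Q i y.
Proof.
move=> /choice [d dQ]; exists (\big[Order.min/1]_i d i); split.
  by apply: (big_ind (fun x : R => 0 < x)) => // [x y x0' y0|i _]; rewrite ?lt_min ?x0' ?y0 ?(dQ i).1.
move=> i y yd; apply: (dQ i).2; apply: lt_le_trans yd _.
by rewrite (bigD1 i) //= ge_min lexx.
Qed.

End Small.

Section Derivative.
Variable R : realType.

Lemma has_deriv_continuous m k (F : 'rV[R]_m -> 'rV[R]_k) x D : has_deriv F x D ->
  forall e : R, 0 < e -> exists d : R, 0 < d /\
    forall y, enorm (y - x) < d -> enorm (F y - F x) < e.
Proof.
move=> dF e e0; have [d0 [d0p near1]] := dF 1 ltr01.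
have cp : 0 < mxnorm1 D + 1 by have := mxnorm1_ge0 D; lra.
exists (Order.min d0 (e / (mxnorm1 D + 1))); split; first by rewrite lt_min d0p divr_gt0.
move=> y; rewrite lt_min => /andP [yd0 ye].
have := near1 _ yd0; rewrite mul1r (addrC x) subrK => rem.
have := enorm_subr (F y - F x) ((y - x) *m D); have := enorm_mulmx (y - x) D.
move: ye; rewrite ltr_pdivlMr // => ye.
have := enorm_ge0 (y - x); have := mxnorm1_ge0 D; nra.
Qed.

Lemma has_deriv_norm_continuous n k (Phi : 'rV[R]_n -> 'rV[R]_k) y (W : 'M[R]_(k, n)) l D :
  has_deriv Phi (y - l *m W) D -> forall e : R, 0 < e -> exists d : R, 0 < d /\
    forall mu, enorm (mu - l) < d -> `|enorm (Phi (y - mu *m W)) - enorm (Phi (y - l *m W))| < e.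
Proof.
move=> dPhi e e0; have [d [dp near_d]] := has_deriv_continuous dPhi e0.
have wp : 0 < mxnorm1 W + 1 by have := mxnorm1_ge0 W; lra.
exists (d / (mxnorm1 W + 1)); split => [|mu mul]; first exact: divr_gt0.
apply: le_lt_trans (enorm_dist _ _) (near_d _ _).
have -> : y - mu *m W - (y - l *m W) = (l - mu) *m W.
  by rewrite mulmxBl; apply/rowP => j; rewrite !mxE; ring.
apply: le_lt_trans (enorm_mulmx _ _) _; rewrite enormBC.
exact: mul_lt_of_le_div dp (mxnorm1_ge0 _) (enorm_ge0 _) (ltW mul).
Qed.

Lemma has_deriv_uniq m k (F : 'rV[R]_m -> 'rV[R]_k) x D1 D2 :
  has_deriv F x D1 -> has_deriv F x D2 -> D1 = D2.
Proof.
move=> dF1 dF2.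
have small w e : 0 < e -> enorm (w *m (D1 - D2)) <= e * (2 * enorm w).
  move=> e0; have [d1 [d1p near1]] := dF1 e e0; have [d2 [d2p near2]] := dF2 e e0.
  pose d := Order.min d1 d2; pose s := d / (enorm w + 1).
  have dp : 0 < d by rewrite lt_min d1p d2p.
  have sp : 0 < s by rewrite divr_gt0 // ltr_wpDl ?enorm_ge0.
  have sw : enorm (s *: w) < d.
    by rewrite enormZ ger0_norm ?(ltW sp) // mul_lt_of_le_div ?enorm_ge0 ?(ltW sp).
  move: sw; rewrite lt_min => /andP [/near1 r1 /near2 r2].
  have := enormB (F (x + s *: w) - F x - (s *: w) *m D2) (F (x + s *: w) - F x - (s *: w) *m D1).
  have -> : F (x + s *: w) - F x - (s *: w) *m D2 - (F (x + s *: w) - F x - (s *: w) *m D1)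
      = (s *: w) *m (D1 - D2) by rewrite mulmxBr; apply/rowP => j; rewrite !mxE; ring.
  move: r1 r2; rewrite -scalemxAl !enormZ ger0_norm ?(ltW sp) // => r1 r2 sum.
  by rewrite -(ler_pM2l sp); lra.
apply/matrixP => i j; apply/eqP; rewrite -subr_eq0; apply/eqP.
have /enorm_eq0 : enorm ('e_i *m (D1 - D2)) = 0.
  apply/eqP; rewrite eq_le enorm_ge0 andbT.
  exact: le0_of_le_mul (mulr_ge0 _ (enorm_ge0 _)) (small _).
by rewrite -rowE => /rowP/(_ j); rewrite !mxE.
Qed.

Lemma C2_on_deriv_continuous n k (Phi : 'rV[R]_n -> 'rV[R]_k) D U x :
  open_set U -> U x -> C2_on Phi U -> (forall y, U y -> has_deriv Phi y (D y)) ->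
  forall e : R, 0 < e -> exists d : R, 0 < d /\
    forall y, enorm (y - x) < d -> mxnorm1 (D y - D x) < e.
Proof.
move=> oU Ux [DF [dPhi [DG [dDF _]]]] dPhiD e e0.
have DFE y : U y -> D y = DF y by move=> Uy; apply: has_deriv_uniq (dPhiD _ Uy) (dPhi _ Uy).
have [rU [rUp ballU]] := oU x Ux.
pose c : R := (n * k)%:R + 1.
have cp : 0 < c by rewrite ltr_wpDl ?ler0n.
have [d [dp nearx]] := has_deriv_continuous (dDF _ Ux) (divr_gt0 e0 cp).
exists (Order.min d rU); split; first by rewrite lt_min dp rUp.
move=> y; rewrite lt_min => /andP [yd yU].
have Uy := ballU y yU; rewrite !DFE //; apply: le_lt_trans (mxnorm1_le_mxvec _) _.
have := nearx y yd; rewrite -linearB ltr_pdivlMr // => vec_lt.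
have := enorm_ge0 (mxvec (DF y - DF x)); rewrite /c in vec_lt *; nra.
Qed.

End Derivative.

Section ZeroSet.
Variable R : realType.

Lemma box_argmin k (q : 'rV[R]_k -> R) (rho : R) : 0 <= rho ->
  (forall l : 'rV_k, (forall i, `|l 0 i| <= rho) -> forall e : R, 0 < e ->
     exists d : R, 0 < d /\ forall mu, enorm (mu - l) < d -> `|q mu - q l| < e) ->
  exists2 ls : 'rV_k, (forall i, `|ls 0 i| <= rho) &
    forall l : 'rV_k, (forall i, `|l 0 i| <= rho) -> q ls <= q l.
Proof.
move=> rho0 qcont.
pose A := [set v : 'rV[R]_k | forall i, (fun=> `[- rho, rho]%classic) i (v 0 i)].
have cA : compact A by apply: rV_compact => _; exact: segment_compact.
have inA v : A v <-> (forall i, `|v 0 i| <= rho).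
  by split=> vA i; have := vA i; rewrite /= in_itv /= ler_norml.
have cq : {within A, continuous q}.
  apply: continuous_in_subspaceT => l /set_mem /inA /qcont lA.
  apply/(@cvgrPdist_lt _ _ _ _ (nbhs_filter l)) => e e0.
  have [d [dp dq]] := lA e e0; have kp : 0 < k%:R + 1 :> R by rewrite ltr_wpDl ?ler0n.
  pose r := d / (k%:R + 1); have rp : 0 < r by exact: divr_gt0.
  have : \forall mu \near l, forall i, `|l 0 i - (mu : 'rV[R]_k) 0 i| < r.
    by apply/nbhs_ballP; exists r => // mu [_ near_mu] i; exact: near_mu.
  apply: filterS => mu near_mu; rewrite -normrN opprB; apply: dq.
  apply: le_lt_trans (enorm_le_coord (c := r) _) _.
    by move=> i; rewrite !mxE distrC ltW.
  by rewrite mulrC (mul_lt_of_le_div dp (ler0n _ _) (ltW rp) (lexx _)).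
have [|ls /set_mem lsA lsmin] := EVT_min_rV _ cA cq.
  by exists 0; apply/inA => i; rewrite mxE normr0.
by exists ls => [|l /inA lA]; [exact/inA | apply: lsmin; exact/mem_set].
Qed.

(* A Newton step [- s Phi(z) W] would shrink |Phi| by the factor 1 - s (1 - c) / 2. *)
Lemma local_min_norm_eq0 n k (Phi : 'rV[R]_n -> 'rV[R]_k) z (Dz : 'M[R]_(n, k))
    (W : 'M[R]_(k, n)) (r c : R) :
  has_deriv Phi z Dz -> 0 < r -> c < 1 ->
  (forall v : 'rV_k, enorm (v *m W *m Dz - v) <= c * enorm v) ->
  (forall mu : 'rV_k, enorm mu < r -> enorm (Phi z) <= enorm (Phi (z - mu *m W))) ->
  Phi z = 0.
Proof.
move=> dPhi rp c1 W_approx zmin.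
set P := enorm (Phi z); pose w := mxnorm1 W.
have P0 : 0 <= P := enorm_ge0 _; have w0 : 0 <= w := mxnorm1_ge0 W.
pose e := (1 - c) / (2 * (w + 1)).
have ep : 0 < e by rewrite divr_gt0 //; lra.
have ew : e * w <= (1 - c) / 2.
  have : e * (2 * (w + 1)) = 1 - c by rewrite /e divfK //; lra.
  lra.
have [d [dp rem]] := dPhi e ep.
pose s := Order.min 1 (Order.min (r / (P + 1)) (d / (P * w + 1))).
have sp : 0 < s by rewrite !lt_min ltr01 !divr_gt0 //; nra.
have [s1 sr sd] : [/\ s <= 1, s <= r / (P + 1) & s <= d / (P * w + 1)].
  by split; rewrite /s !ge_min lexx ?orbT.
pose h := - ((s *: Phi z) *m W).
have hn : enorm h <= s * (P * w).
  by rewrite enormN; apply: le_trans (enorm_mulmx _ _) _; rewrite enormZ ger0_norm ?(ltW sp) // mulrA.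
have dec : Phi (z - (s *: Phi z) *m W) =
    (1 - s) *: Phi z - s *: (Phi z *m W *m Dz - Phi z) + (Phi (z + h) - Phi z - h *m Dz).
  by rewrite /h mulNmx -!scalemxAl; apply/rowP => j; rewrite !mxE; ring.
have := zmin (s *: Phi z); rewrite enormZ ger0_norm ?(ltW sp) // dec.
move=> /(_ (mul_lt_of_le_div rp P0 (ltW sp) sr)) Pdec.
have Prem := rem h (le_lt_trans hn (mul_lt_of_le_div dp (mulr_ge0 P0 w0) (ltW sp) sd)).
have : P <= (1 - s) * P + s * (c * P) + e * (s * (P * w)).
  apply: le_trans Pdec _; apply: le_trans (enormD _ _) _; apply: lerD.
    apply: le_trans (enormB _ _) _; rewrite !enormZ ger0_norm ?subr_ge0 //.
    by rewrite ger0_norm ?(ltW sp) // lerD2l ler_wpM2l ?(ltW sp) ?W_approx.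
  by apply: le_trans Prem _; rewrite ler_wpM2l ?(ltW ep).
move=> Pbound; apply: enorm_eq0; apply/eqP; rewrite eq_le P0 andbT.
have : s * P * ((1 - c) / 2) <= 0 by nra.
by rewrite pmulr_lle0 ?divr_gt0 ?subr_gt0 // pmulr_rle0.
Qed.

End ZeroSet.

Section Subdifferential.
Variables (R : realType) (n : nat).
Implicit Types (Psi : 'rV[R]_n -> \bar R) (y z v g : 'rV[R]_n).

Lemma subdiff_fin_num Psi y g : subdiff Psi y g -> Psi y = (fine (Psi y))%:E.
Proof. by move=> [/fineK]. Qed.

Lemma subdiff_mono Psi y z v g :
  subdiff Psi y v -> subdiff Psi z g -> 0 <= dotv (v - g) (y - z).
Proof.
move=> yv zg; have := yv.2 z; have := zg.2 y.
rewrite (subdiff_fin_num yv) (subdiff_fin_num zg) -!EFinD !lee_fin.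
rewrite dotvBl !dotvBr (dotvC v) (dotvC g); lra.
Qed.

Lemma subdiff_mono_dir Psi y z v g g0 (a : 'rV[R]_n) :
  subdiff Psi y v -> subdiff Psi z g ->
  dotv a (y - z) <= (enorm (v - g0) + enorm (g0 + a - g)) * enorm (y - z).
Proof.
move=> /subdiff_mono/[apply] mono.
have -> : dotv a (y - z) = dotv (v - g0) (y - z) + dotv (g0 + a - g) (y - z) - dotv (v - g) (y - z).
  by rewrite -dotvDl -dotvBl; congr dotv; apply/rowP => j; rewrite !mxE; ring.
have := dotv_le_enorm (v - g0) (y - z); have := dotv_le_enorm (g0 + a - g) (y - z); lra.
Qed.

Lemma quad_form_expand (gx : 'rV[R]_n) (H : 'M[R]_n) (p d : 'rV[R]_n) (s : R) : H^T = H ->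
  dotv gx (p + s *: d) + 2^-1 * dotv (p + s *: d) ((p + s *: d) *m H) =
  dotv gx p + 2^-1 * dotv p (p *m H) + s * (dotv gx d + dotv d (p *m H))
    + s ^+ 2 / 2 * dotv d (d *m H).
Proof.
move=> Hsym; have Hdp : dotv p (d *m H) = dotv d (p *m H).
  by rewrite dotvC !dotvE trmx_mul Hsym mulmxA.
by rewrite mulmxDl !dotvDl !dotvDr -scalemxAl !dotvZl !dotvZr Hdp; field.
Qed.

End Subdifferential.

Section QuadraticModel.
Variables (R : realType) (n : nat) (Psi : 'rV[R]_n -> \bar R).
Variables (gx : 'rV[R]_n) (H : 'M[R]_n) (xt p r : 'rV[R]_n).
Hypotheses (Hsym : H^T = H) (Psi_cvx : convex_fun Psi) (Psi_nm : forall x, Psi x != -oo%E).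
Hypothesis r_sub : subdiff (Qmodel gx H Psi xt) p r.

Lemma Qmodel_subdiff_fin_num : exists c P : R, Psi xt = c%:E /\ Psi (xt + p) = P%:E.
Proof.
have := r_sub.1; have := Psi_nm xt; have := Psi_nm (xt + p); rewrite /Qmodel.
by case: (Psi xt) => [c| |]; case: (Psi (xt + p)) => [P| |] //= _ _ _; exists c, P.
Qed.

Lemma Qmodel_subdiff_step w (W P s : R) : Psi w = W%:E -> Psi (xt + p) = P%:E -> 0 < s < 1 ->
  dotv (r - gx - p *m H) (w - (xt + p)) <=
    W - P + s * (2^-1 * dotv (w - (xt + p)) ((w - (xt + p)) *m H)).
Proof.
set d := w - (xt + p) => Pw Pxp s01; have s0 : 0 < s by case/andP: s01.
have := Psi_cvx w (xt + p) s01; rewrite Pw Pxp -!EFinM -EFinD.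
have -> : s *: w + (1 - s) *: (xt + p) = xt + (p + s *: d).
  by apply/rowP => j; rewrite !mxE; ring.
case Ps: (Psi (xt + (p + s *: d))) => [Z| |] //; last by have := Psi_nm (xt + (p + s *: d)); rewrite Ps.
rewrite lee_fin => cvx_s; have [c [? [Pxt _]]] := Qmodel_subdiff_fin_num.
have := r_sub.2 (p + s *: d); rewrite /Qmodel Ps Pxp Pxt [p + s *: d - p]addrC addKr.
rewrite -!EFinN -!EFinD lee_fin quad_form_expand // dotvZr => sub_s.
rewrite -(ler_pM2l s0) [dotv (r - _ - _) _]dotvBl [dotv (r - _) _]dotvBl (dotvC (p *m H)).
move: sub_s cvx_s; rewrite expr2; lra.
Qed.

Lemma Qmodel_subdiff : subdiff Psi (xt + p) (r - gx - p *m H).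
Proof.
have [c [P [_ Pxp]]] := Qmodel_subdiff_fin_num.
split=> [|w]; first by rewrite Pxp.
case Pw: (Psi w) => [W| |]; [| by rewrite leey | by have := Psi_nm w; rewrite Pw].
rewrite Pxp -EFinD lee_fin.
set d := w - (xt + p); set v := r - gx - p *m H.
suff : dotv v d - (W - P) <= 0 by lra.
apply: (le0_of_le_mul_small (c := 2^-1 * dotv d (d *m H))) => s.
by move=> /(Qmodel_subdiff_step Pw Pxp); lra.
Qed.

End QuadraticModel.

Lemma split_lshift m n (i : 'I_m) : split (lshift n i) = inl i.
Proof. exact: (@unsplitK m n (inl i)). Qed.

Lemma split_rshift m n (i : 'I_n) : split (rshift m i) = inr i.
Proof. exact: (@unsplitK m n (inr i)). Qed.

Section AffineSpan.
Variables (R : realType) (n : nat) (S : set 'rV[R]_n).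

Lemma aff_span_mem g : S g -> aff_span S g.
Proof.
move=> Sg; exists 1%N, (fun=> 1), (fun=> g).
by split => //; rewrite big_ord1 ?scale1r.
Qed.

Lemma aff_span_comb2 a b (t : R) :
  aff_span S a -> aff_span S b -> aff_span S (t *: a + (1 - t) *: b).
Proof.
move=> [m1 [l1 [g1 [S1 sum1 ->]]]] [m2 [l2 [g2 [S2 sum2 ->]]]].
exists (m1 + m2)%N,
  (fun i => match split i with inl i1 => t * l1 i1 | inr i2 => (1 - t) * l2 i2 end),
  (fun i => match split i with inl i1 => g1 i1 | inr i2 => g2 i2 end).
split=> [i||]; first by case: (split i).
  rewrite big_split_ord /=.
  under eq_bigr do rewrite split_lshift.
  under [X in _ + X = _]eq_bigr do rewrite split_rshift.
  by rewrite -!mulr_sumr sum1 sum2 !mulr1 addrC subrK.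
rewrite big_split_ord /= !scaler_sumr.
under eq_bigr do rewrite split_lshift.
under [X in _ = _ + X]eq_bigr do rewrite split_rshift.
by congr (_ + _); apply: eq_bigr => i _; rewrite scalerA.
Qed.

Lemma aff_span_translate (c y : 'rV[R]_n) :
  aff_span S y -> aff_span [set v | exists u, S u /\ v = c + u] (c + y).
Proof.
move=> [m [l [g [Sg suml ->]]]]; exists m, l, (fun i => c + g i); split => //.
  by move=> i; exists (g i).
apply/esym; under eq_bigr do rewrite scalerDr.
by rewrite big_split /= -scaler_suml suml scale1r.
Qed.

End AffineSpan.

Lemma relint_normal_ball (R : realType) n k (gradf : 'rV[R]_n -> 'rV[R]_n) (Psi : 'rV[R]_n -> \bar R)
    xs (M : set 'rV[R]_n) U (Phi : 'rV[R]_n -> 'rV[R]_k) DPhi :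
  relint (subdiffF gradf Psi xs) 0 ->
  (exists s, forall y, aff_span (subdiff Psi xs) y <-> normal_space M xs (y - s)) ->
  manifold_chart M xs U Phi DPhi ->
  exists e0 : R, 0 < e0 /\ forall u, (forall h, h *m DPhi xs = 0 -> dotv u h = 0) ->
    enorm u < e0 -> subdiff Psi xs (- gradf xs + u).
Proof.
move=> [[u0 [u0_sub u0E]] [e [ep rel]]] [s aff_normal] chart.
have g_sub : subdiff Psi xs (- gradf xs).
  by rewrite (_ : - gradf xs = u0) //; apply: (addrI (gradf xs)); rewrite -u0E subrr.
exists e; split => // u u_normal ue.
have normal w : (forall h, h *m DPhi xs = 0 -> dotv w h = 0) -> normal_space M xs w.
  by move=> w_normal; exists k, U, Phi, DPhi.
have aff_s : aff_span (subdiff Psi xs) s.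
  by apply/aff_normal; rewrite subrr; apply: normal => h _; rewrite dotv0l.
have aff_us : aff_span (subdiff Psi xs) (u + s) by apply/aff_normal; rewrite addrK; exact: normal.
have := aff_span_comb2 2 (aff_span_comb2 2^-1 (aff_span_mem g_sub) aff_us) aff_s.
have -> : 2 *: (2^-1 *: - gradf xs + (1 - 2^-1) *: (u + s)) + (1 - 2) *: s = - gradf xs + u.
  by apply/rowP => j; rewrite !mxE; field.
move=> /(aff_span_translate (gradf xs)); rewrite addNKr => /rel.
by rewrite subr0 => /(_ ue) [u' [u'_sub ->]]; rewrite addKr.
Qed.

Section ChartProjection.
Variables (R : realType) (n k : nat) (Phi : 'rV[R]_n -> 'rV[R]_k).
Variables (D : 'rV[R]_n -> 'M[R]_(n, k)) (U : set 'rV[R]_n) (xs : 'rV[R]_n).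
Variable W : 'M[R]_(k, n).
Hypotheses (oU : open_set U) (Uxs : U xs) (Phi_xs : Phi xs = 0).
Hypothesis dPhi : forall y, U y -> has_deriv Phi y (D y).
Hypothesis D_cont : forall e : R, 0 < e -> exists d : R, 0 < d /\
  forall y, enorm (y - xs) < d -> mxnorm1 (D y - D xs) < e.
Hypothesis WD : W *m D xs = 1%:M.

Lemma right_inverse_perturbed z e (v : 'rV[R]_k) :
  e * mxnorm1 W <= 2^-1 -> mxnorm1 (D z - D xs) < e ->
  enorm (v *m W *m D z - v) <= 2^-1 * enorm v.
Proof.
move=> eW Dz_near.
have -> : v *m W *m D z - v = v *m W *m (D z - D xs) by rewrite mulmxBr -[v *m W *m D xs]mulmxA WD mulmx1.
apply: le_trans (enorm_mulmx _ _) _.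
apply: le_trans (ler_wpM2r (mxnorm1_ge0 _) (enorm_mulmx v W)) _.
rewrite -mulrA mulrC ler_wpM2r ?enorm_ge0 //; apply: le_trans eW.
by rewrite mulrC ler_wpM2r ?mxnorm1_ge0 ?ltW.
Qed.

Lemma descent_along_W_norm_le e y mu : 0 <= e -> e * mxnorm1 W <= 2^-1 ->
  enorm (Phi y - (y - xs) *m D xs) <= e * enorm (y - xs) ->
  enorm (Phi (y - mu *m W) - (y - mu *m W - xs) *m D xs) <= e * enorm (y - mu *m W - xs) ->
  enorm (Phi (y - mu *m W)) <= enorm (Phi y) ->
  enorm mu <= 4 * (mxnorm1 (D xs) + e) * enorm (y - xs).
Proof.
set z := y - mu *m W => e0 eW lin_y lin_z descent.
have mu_eq : mu = (y - xs) *m D xs - (z - xs) *m D xs.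
  by rewrite -mulmxBl /z opprB addrA subrK opprD opprK addNKr -mulmxA WD mulmx1.
have zx : enorm (z - xs) <= enorm (y - xs) + enorm mu * mxnorm1 W.
  by rewrite /z addrAC; apply: le_trans (enormB _ _) _; rewrite lerD2l enorm_mulmx.
have mu_le : enorm mu <= enorm (y - xs) * mxnorm1 (D xs) + (enorm (Phi z) + e * enorm (z - xs)).
  rewrite {1}mu_eq; apply: le_trans (enormB _ _) _; apply: lerD; first exact: enorm_mulmx.
  by apply: le_trans (enorm_subr _ (Phi z)) _; rewrite enormBC addrC lerD2l.
have Phi_y := enorm_subr (Phi y) ((y - xs) *m D xs).
have := enorm_mulmx (y - xs) (D xs); have := ler_wpM2l e0 zx.
have := ler_wpM2r (enorm_ge0 mu) eW; have := enorm_ge0 (y - xs); nra.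
Qed.

Lemma chart_near e : 0 < e -> exists r : R, 0 < r /\ forall z, enorm (z - xs) < r ->
  [/\ U z, mxnorm1 (D z - D xs) < e & enorm (Phi z - (z - xs) *m D xs) <= e * enorm (z - xs)].
Proof.
move=> ep; have [rU [rUp ballU]] := oU Uxs.
have [d1 [d1p lin]] := dPhi Uxs ep; have [dD [dDp Dnear]] := D_cont ep.
exists (Order.min rU (Order.min d1 dD)); split; first by rewrite !lt_min rUp d1p dDp.
move=> z; rewrite !lt_min => /andP [zU /andP [zd1 zD]]; split; [exact: ballU | exact: Dnear |].
by have := lin _ zd1; rewrite (addrC xs) subrK Phi_xs subr0.
Qed.

Lemma interior_argmin_zero e y rho (ls : 'rV_k) : e * mxnorm1 W <= 2^-1 -> enorm ls < rho ->
  U (y - ls *m W) -> mxnorm1 (D (y - ls *m W) - D xs) < e ->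
  (forall l : 'rV_k, (forall i, `|l 0 i| <= rho) ->
     enorm (Phi (y - ls *m W)) <= enorm (Phi (y - l *m W))) ->
  Phi (y - ls *m W) = 0.
Proof.
move=> eW ls_int Uz Dz_near ls_min.
apply: (local_min_norm_eq0 (r := rho - enorm ls) (c := 2^-1) (dPhi Uz)).
- by rewrite subr_gt0.
- by rewrite invf_lt1 ?ltr1n.
- by move=> v; exact: right_inverse_perturbed eW Dz_near.
move=> mu mu_small; rewrite -addrA -opprD -mulmxDl.
apply: ls_min => i; apply: le_trans (coord_le_enorm _ i) _.
by apply: le_trans (enormD _ _) _; lra.
Qed.

Lemma zero_set_projection (eta : R) : 0 < eta -> exists del : R, 0 < del /\
  forall y, enorm (y - xs) < del -> exists mu : 'rV_k,
    [/\ U (y - mu *m W), Phi (y - mu *m W) = 0 & enorm (y - mu *m W - xs) < eta].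
Proof.
move=> etap; pose w := mxnorm1 W; pose a := mxnorm1 (D xs).
have w0 : 0 <= w := mxnorm1_ge0 W; have a0 : 0 <= a := mxnorm1_ge0 _.
pose e := (2 * (w + 1))^-1; have [ep ew] : 0 < e /\ e * w <= 2^-1 := half_inv_scale w0.
have [r1 [r1p near_r1]] := chart_near ep.
pose r0 := Order.min r1 eta.
have r0p : 0 < r0 by rewrite lt_min r1p etap.
have near_r0 z : enorm (z - xs) < r0 -> [/\ U z, mxnorm1 (D z - D xs) < e,
    enorm (Phi z - (z - xs) *m D xs) <= e * enorm (z - xs) & enorm (z - xs) < eta].
  by rewrite lt_min => /andP [/near_r1 [? ? ?] ?].
pose rho := r0 / 2 / (k%:R * w + 1).
have rhop : 0 < rho by rewrite !divr_gt0 // ltr_wpDl ?mulr_ge0 ?ler0n.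
pose K := 4 * (a + e); have K0 : 0 <= K by rewrite mulr_ge0 //; lra.
exists (Order.min (r0 / 2) (rho / (K + 1))); split.
  by rewrite lt_min (divr_gt0 r0p) // (divr_gt0 rhop) // ltr_wpDl.
move=> y; rewrite lt_min => /andP [yr0 yK].
have {}yK : enorm (y - xs) * K < rho.
  exact: mul_lt_of_le_div rhop K0 (enorm_ge0 _) (ltW yK).
have box_r0 (mu : 'rV_k) : (forall i, `|mu 0 i| <= rho) -> enorm (y - mu *m W - xs) < r0.
  move=> /enorm_le_coord mu_le; rewrite addrAC; apply: le_lt_trans (enormB _ _) _.
  have : enorm mu * w < r0 / 2.
    apply: le_lt_trans (ler_wpM2r w0 mu_le) _; rewrite mulrAC mulrC.
    exact: mul_lt_of_le_div (divr_gt0 r0p (ltr0n _ 2)) (mulr_ge0 (ler0n _ _) w0) (ltW rhop) (lexx _).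
  by have := enorm_mulmx mu W; rewrite -/w; lra.
pose q mu := enorm (Phi (y - mu *m W)).
have [ls ls_box ls_min] : exists2 ls : 'rV_k, (forall i, `|ls 0 i| <= rho) &
    forall l : 'rV_k, (forall i, `|l 0 i| <= rho) -> q ls <= q l.
  apply: box_argmin (ltW rhop) _ => l /box_r0 /near_r0 [Uz _ _ _].
  exact: has_deriv_norm_continuous (dPhi Uz).
have [Uz Dz_near lin_z _] := near_r0 _ (box_r0 _ ls_box).
have [|_ _ lin_y _] := near_r0 y; first lra.
have ls_int : enorm ls < rho.
  have : q ls <= q 0 by apply: ls_min => i; rewrite mxE normr0 ltW.
  rewrite /q mul0mx subr0 => /(descent_along_W_norm_le (ltW ep) ew lin_y lin_z).
  by move/le_lt_trans; apply; rewrite mulrC.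
exists ls; split => //; last by have [] := near_r0 _ (box_r0 _ ls_box).
exact: interior_argmin_zero ew ls_int Uz Dz_near ls_min.
Qed.

Variables (Psi : 'rV[R]_n -> \bar R) (M : set 'rV[R]_n) (gb : 'rV[R]_n).
Hypothesis M_chart : forall y, U y -> (M y <-> Phi y = 0).
Hypothesis normal_ball : exists e0 : R, 0 < e0 /\ forall u,
  (forall h, h *m D xs = 0 -> dotv u h = 0) -> enorm u < e0 -> subdiff Psi xs (gb + u).
Hypothesis subdiff_inner : forall g, subdiff Psi xs g -> forall e : R, 0 < e ->
  exists d : R, 0 < d /\ forall y, M y -> enorm (y - xs) < d ->
    exists g', subdiff Psi y g' /\ enorm (g' - g) < e.

Lemma normal_subgradients : exists rho : R, 0 < rho /\ forall (i : 'I_k) (b : bool),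
  subdiff Psi xs (gb + (if b then rho else - rho) *: ('e_i *m (D xs)^T)).
Proof.
have [e0 [e0p ball]] := normal_ball; pose t := mxnorm1 (D xs)^T.
have t0 : 0 <= t := mxnorm1_ge0 _.
pose rho := e0 / (t + 1); have rhop : 0 < rho by rewrite divr_gt0 //; lra.
exists rho; split => // i b; apply: ball => [h hD|].
  by rewrite dotvZl dotv_mulmx hD dotv0r mulr0.
rewrite enormZ (_ : `|_| = rho); last by case: b; rewrite ?normrN gtr0_norm.
apply: le_lt_trans (mul_lt_of_le_div e0p t0 (ltW rhop) (lexx _)).
by rewrite ler_wpM2l ?(ltW rhop) //; apply: le_trans (enorm_mulmx _ _) _; rewrite enorm_delta mul1r.
Qed.

Lemma identification : exists dI eI : R, 0 < dI /\ 0 < eI /\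
  forall y v, enorm (y - xs) < dI -> subdiff Psi y v -> enorm (v - gb) < eI -> M y.
Proof.
have [rho [rhop normal_sub]] := normal_subgradients.
pose kap := (2 * (k%:R * mxnorm1 W + 1))^-1.
have [kapp kapW] : 0 < kap /\ kap * (k%:R * mxnorm1 W) <= 2^-1 :=
  half_inv_scale (mulr_ge0 (ler0n _ k) (mxnorm1_ge0 W)).
pose eps := kap * rho / 2; have epsp : 0 < eps by rewrite divr_gt0 // mulr_gt0.
pose sg (b : bool) := if b then rho else - rho.
pose gj (j : 'I_k * bool) := gb + sg j.2 *: ('e_j.1 *m (D xs)^T).
have : forall j, exists d : R, 0 < d /\ forall z, enorm (z - xs) < d -> M z ->
    exists g', subdiff Psi z g' /\ enorm (g' - gj j) < eps.
  move=> j; have [d [dp near_d]] := subdiff_inner (normal_sub j.1 j.2) epsp.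
  by exists d; split=> // z zd Mz; exact: near_d.
move=> /near_finite [dm [dmp near_gj]].
have [dz [dzp proj]] := zero_set_projection dmp.
exists dz, eps; split=> //; split=> // y v yd v_sub v_near.
have [mu [Uz /(M_chart Uz) Mz zd]] := proj y yd.
suff : mu *m W = 0 by move: Mz; rewrite /= => /[swap] ->; rewrite subr0.
apply: (mulmx_eq0_of_coord_small kapW) => i.
have d_eq : y - (y - mu *m W) = mu *m W by rewrite opprB addrC subrK.
have bound b : sg b * mu 0 i <= kap * rho * enorm (mu *m W).
  have [g' [g'_sub g'_near]] := near_gj (i, b) _ zd Mz.
  have := subdiff_mono_dir gb (sg b *: ('e_i *m (D xs)^T)) v_sub g'_sub.
  rewrite dotvZl dotv_mulmx d_eq -mulmxA WD mulmx1 dotv_delta => /le_trans; apply.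
  rewrite ler_wpM2r ?enorm_ge0 // (enormBC _ g') -/(gj (i, b)).
  by move: v_near g'_near; rewrite /eps; lra.
rewrite -(ler_pM2l rhop); have := bound true; have := bound false; rewrite /sg.
by case: ler0P; lra.
Qed.

End ChartProjection.

Section PositiveSemidefinite.
Variables (R : realType) (n : nat) (H : 'M[R]_n).
Hypotheses (Hsym : H^T = H) (Hpsd : forall w, 0 <= dotv w (w *m H)).

Lemma psd_cauchy_schwarz (u v : 'rV[R]_n) :
  dotv u (v *m H) ^+ 2 <= dotv u (u *m H) * dotv v (v *m H).
Proof.
apply: discriminant_le; first exact: Hpsd.
move=> t; have := Hpsd (u - t *: v).
have Hvu : dotv v (u *m H) = dotv u (v *m H) by rewrite dotvC !dotvE trmx_mul Hsym mulmxA.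
rewrite mulmxBl -scalemxAl !dotvBl !dotvBr !dotvZl !dotvZr Hvu; congr (_ <= _); ring.
Qed.

Lemma psd_enorm_mulmx (Mb : R) (p : 'rV[R]_n) : 0 <= Mb ->
  (forall w, dotv w (w *m H) <= Mb * dotv w w) -> enorm (p *m H) <= Mb * enorm p.
Proof.
move=> Mb0 Hle; set q := p *m H.
have cs := psd_cauchy_schwarz q p; rewrite -/q in cs.
have qq : dotv q q ^+ 2 <= (Mb * dotv q q) * (Mb * dotv p p).
  by apply: le_trans cs _; apply: ler_pM; rewrite ?Hpsd ?Hle.
apply: ler_of_sqr; first by rewrite mulr_ge0 ?enorm_ge0.
rewrite exprMn !enorm_sqr.
have [q0|qn0] := eqVneq (dotv q q) 0; first by rewrite q0 mulr_ge0 ?sqr_ge0 ?dotvv_ge0.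
have qp : 0 < dotv q q by rewrite lt_def qn0 dotvv_ge0.
by rewrite -(ler_pM2l qp); move: qq; rewrite expr2; nra.
Qed.

End PositiveSemidefinite.

Lemma quadratic_growth_le (R : realType) (m a b e x : R) :
  0 < m -> 0 <= a -> 0 <= b -> 0 <= e -> 0 <= x ->
  m * x ^+ 2 <= a * (x + e) + b * x * e -> x <= e + (2 * a + b * e) / m.
Proof.
move=> mp a0 b0 e0 x0 quad.
have [xe|ex] := lerP x e.
  by apply: le_trans xe _; rewrite lerDl divr_ge0 ?addr_ge0 ?mulr_ge0 // ltW.
have : x * (m * x) <= x * (2 * a + b * e) by nra.
rewrite ler_pM2l ?(le_lt_trans e0 ex) // -ler_pdivlMl // mulrC => xm.
by apply: le_trans xm _; rewrite lerDr.
Qed.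

Lemma prox_step_le (R : realType) n (m Mb : R) (H : 'M[R]_n) (P E a : 'rV[R]_n) :
  0 < m -> 0 <= Mb -> m * dotv P P <= dotv P (P *m H) -> enorm (P *m H) <= Mb * enorm P ->
  0 <= dotv (a - P *m H) (P + E) ->
  enorm P <= enorm E + (2 * enorm a + Mb * enorm E) / m.
Proof.
move=> mp Mb0 Hlow Hup mono.
apply: quadratic_growth_le; rewrite ?enorm_ge0 //.
have aPE : dotv a (P + E) <= enorm a * (enorm P + enorm E).
  by apply: le_trans (dotv_le_enorm _ _) _; rewrite ler_wpM2l ?enorm_ge0 ?enormD.
have HE : - dotv (P *m H) E <= Mb * enorm P * enorm E.
  rewrite -dotvNl; apply: le_trans (dotv_le_enorm _ _) _.
  by rewrite enormN ler_wpM2r ?enorm_ge0.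
move: mono; rewrite dotvBl [dotv (P *m H) _]dotvDr (dotvC (P *m H) P) enorm_sqr; lra.
Qed.

Section IsqaStep.
Variables (R : realType) (n : nat) (f : 'rV[R]_n -> R) (gradf : 'rV[R]_n -> 'rV[R]_n).
Variables (Psi : 'rV[R]_n -> \bar R) (gamma beta : R) (x : nat -> 'rV[R]_n).
Variables (Hs : nat -> 'M[R]_n) (eps : nat -> R) (p r : nat -> 'rV[R]_n) (alpha : nat -> R).
Variables (m Mb : R).
Hypotheses (Hrun : isqa_run f gradf Psi gamma beta x Hs eps p r alpha).
Hypotheses (Psi_cvx : convex_fun Psi) (Psi_prop : proper_fun Psi).
Hypotheses (mp : 0 < m) (mMb : m <= Mb).
Hypothesis Hs_bounds : forall t v,
  m * dotv v v <= dotv v (v *m Hs t) /\ dotv v (v *m Hs t) <= Mb * dotv v v.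

Lemma isqa_unit_step_subdiff t : alpha t = 1 ->
  x t.+1 = x t + p t /\ subdiff Psi (x t.+1) (r t - gradf (x t) - p t *m Hs t).
Proof.
move: Hrun => [_ [Hsym_psd Hr _ Hx]] at1.
have xE : x t.+1 = x t + p t by rewrite Hx at1 scale1r.
split => //; rewrite xE; apply: Qmodel_subdiff Psi_cvx Psi_prop.1 (Hr t).1.1.
exact: (Hsym_psd t).1.
Qed.

Lemma isqa_unit_step_close xs t (L tau : R) :
  subdiff Psi xs (- gradf xs) -> 0 <= L ->
  enorm (gradf (x t) - gradf xs) <= L * enorm (x t - xs) ->
  enorm (x t - xs) <= tau -> eps t <= tau -> alpha t = 1 ->
  enorm (x t.+1 - xs) <= tau * (2 + (2 + 2 * L + Mb) / m) /\
  enorm (r t - gradf (x t) - p t *m Hs t - - gradf xs) <= tau * (1 + L + Mb * (1 + (2 + 2 * L + Mb) / m)).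
Proof.
move=> xs_sub L0 Lip xt epst at1.
have [xE v_sub] := isqa_unit_step_subdiff at1.
move: Hrun => [_ [Hsym_psd Hr _ _]]; have [Hsym Hpsd] := Hsym_psd t.
have Mb0 : 0 <= Mb by apply: ltW; apply: lt_le_trans mMb.
have PH : enorm (p t *m Hs t) <= Mb * enorm (p t).
  by apply: psd_enorm_mulmx => // w; have [] := Hs_bounds t w.
set a := r t - (gradf (x t) - gradf xs).
have a_le : enorm a <= tau * (1 + L).
  apply: le_trans (enormB _ _) _; have := le_trans (Hr t).2 epst.
  have := le_trans Lip (ler_wpM2l L0 xt); lra.
have v_eq : r t - gradf (x t) - p t *m Hs t - - gradf xs = a - p t *m Hs t.
  by apply/rowP => j; rewrite !mxE; ring.
have y_eq : x t.+1 - xs = p t + (x t - xs) by rewrite xE addrAC addrC.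
have := subdiff_mono v_sub xs_sub; rewrite v_eq y_eq => mono.
have := prox_step_le mp Mb0 (Hs_bounds t (p t)).1 PH mono.
have t0 : 0 <= tau := le_trans (enorm_ge0 _) xt.
have rate : (2 * enorm a + Mb * enorm (x t - xs)) / m <= tau * ((2 + 2 * L + Mb) / m).
  rewrite mulrA ler_pM2r ?invr_gt0 //.
  by have := ler_wpM2l Mb0 xt; lra.
move=> P_le; split.
  by apply: le_trans (enormD _ _) _; lra.
apply: le_trans (enormB _ _) _; apply: le_trans (lerD a_le PH) _.
have := ler_wpM2l Mb0 (le_trans P_le (lerD xt rate)); lra.
Qed.

End IsqaStep.

Theorem theorem1 (R : realType) (n : nat)
  (f : 'rV[R]_n -> R) (gradf : 'rV[R]_n -> 'rV[R]_n) (Psi : 'rV[R]_n -> \bar R)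
  (* standing assumptions *)
  (Hgrad : has_gradient f gradf)
  (Hgcont : continuous_on gradf setT)
  (Hglip : exists L0 : R, forall y z, enorm (gradf y - gradf z) <= L0 * enorm (y - z))
  (Hconv : convex_fun Psi) (Hprop : proper_fun Psi) (Hlsc : lsc_fun Psi)
  (Hsol : exists xm, forall y, (Fobj f Psi xm <= Fobj f Psi y)%E)
  (* the point x*, the manifold, smoothness near x* *)
  (xs : 'rV[R]_n) (M : set 'rV[R]_n)
  (Hrelint : relint (subdiffF gradf Psi xs) 0)
  (Hps : partly_smooth Psi xs M)
  (L : R) (HL : 0 < L)
  (HLloc : exists rho : R, 0 < rho /\ forall y z, enorm (y - xs) < rho ->
             enorm (z - xs) < rho -> enorm (gradf y - gradf z) <= L * enorm (y - z))
  (* the ISQA run *)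
  (gamma beta : R) (x : nat -> 'rV[R]_n) (Hs : nat -> 'M[R]_n) (eps : nat -> R)
  (p r : nat -> 'rV[R]_n) (alpha : nat -> R)
  (Hx0 : Psi (x 0%N) \is a fin_num)
  (Hrun : isqa_run f gradf Psi gamma beta x Hs eps p r alpha)
  (m Mb : R) (Hm : 0 < m) (HmM : m <= Mb)
  (HHbd : forall t v, m * dotv v v <= dotv v (v *m Hs t) /\ dotv v (v *m Hs t) <= Mb * dotv v v) :
  exists epsilon delta : R, 0 < epsilon /\ 0 < delta /\
    forall t : nat, enorm (x t - xs) <= delta -> eps t <= epsilon -> alpha t = 1 ->
      M (x t.+1).
Proof.
move: Hps => [Mxs [_ [[k [U [Phi [DPhi chart]]]] _] aff_normal [inner _] _]].
have [[oU Uxs C2 dPhi surj] M_chart] := chart.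
have Phi_xs : Phi xs = 0 by apply/(M_chart _ Uxs).
have [W WD] := surjective_right_inverse surj.
have normal_ball := relint_normal_ball Hrelint aff_normal chart.
have [dI [eI [dIp [eIp ident]]]] := identification oU Uxs Phi_xs dPhi
  (C2_on_deriv_continuous oU Uxs C2 dPhi) WD M_chart normal_ball inner.
have xs_sub : subdiff Psi xs (- gradf xs).
  have [e0 [e0p ball]] := normal_ball; rewrite -[- gradf xs]addr0.
  by apply: ball => [h _|]; rewrite ?dotv0l ?enorm0.
have [rho [rhop Lloc]] := HLloc.
have Mb0 : 0 < Mb := lt_le_trans Hm HmM.
pose K := 2 + (2 + 2 * L + Mb) / m; pose K' := 1 + L + Mb * (1 + (2 + 2 * L + Mb) / m).
have rate0 : 0 <= (2 + 2 * L + Mb) / m by apply: divr_ge0; lra.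
have K0 : 0 <= K by rewrite /K; lra.
have K'0 : 0 <= K' by have := mulr_ge0 (ltW Mb0) (addr_ge0 ler01 rate0); rewrite /K'; lra.
have [tau [taup tau_rho tau_dI tau_eI]] := small_scale K0 K'0 dIp eIp rhop.
exists tau, tau; split => //; split => // t xt epst at1.
have xt_rho : enorm (x t - xs) < rho := le_lt_trans xt tau_rho.
have xs_rho : enorm (xs - xs) < rho by rewrite subrr enorm0.
have [close_y close_v] := isqa_unit_step_close Hrun Hconv Hprop Hm HmM HHbd xs_sub (ltW HL)
  (Lloc _ _ xt_rho xs_rho) xt epst at1.
apply: (ident _ _ _ (isqa_unit_step_subdiff Hrun Hconv Hprop at1).2).
  exact: le_lt_trans close_y tau_dI.
exact: le_lt_trans close_v tau_eI.
Qed.
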